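(* Let $G=(V,E)$ be a finite graph with at least one vertex and $k>0$ an integer, and let $\mathcal F_k$ be the set of all stars $\sigma=\{(A_i,B_i):i=0,\dots,n\}\subseteq\vec S_k$ with $\bigl|\bigcap_{i=0}^nB_i\bigr|<k$. Then $\mathcal F_k$ is closed under shifting: whenever $\vec s_0\in\vec S_k$ is linked to some $\vec r\le\vec s_0$ in $\vec S_k$ that is not forced by $\mathcal F_k$, then $\vec s_0$ is $\mathcal F_k$-linked to $\vec r$.
   Context: An oriented vertex separation of $G$ is an ordered pair $(A,B)$ with $A\cup B=V$ and no edge between $A\setminus B$ and $B\setminus A$. They form a universe $\vec U$ with $(A,B)\le(C,D)$ iff $A\subseteq C$, $B\supseteq D$; $(A,B)^*=(B,A)$; $(A,B)\vee(C,D)=(A\cup C,B\cap D)$; $(A,B)\wedge(C,D)=(A\cap C,B\cup D)$. $\vec S_k=\{(A,B)\in\vec U:|A\cap B|<k\}$ and $S_k$ is its set of separations $s=\{\vec s,\vec s^{\,*}\}$; write $\overleftarrow s=\vec s^{\,*}$; $s$ is degenerate if $\vec s=\overleftarrow s$; $\vec r$ is trivial if some $s\in S_k$ has $\vec r<\vec s$ and $\vec r<\overleftarrow s$. A star is a nonempty set $\sigma$ with $\vec r\le\overleftarrow s$ for all distinct $\vec r,\vec s\in\sigma$. $\mathcal F$ forces $\vec r$ if $\{\overleftarrow r\}\in\mathcal F$ or $r$ is degenerate (elements not forced by $\mathcal F_k$ are nontrivial and nondegenerate). For nontrivial nondegenerate $\vec r$, $\vec S_{\ge\vec r}$ is the set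 of all orientations of separations in $S_k$ having an orientation $\ge\vec r$; for $\vec s_0\ge\vec r$ the shifting map $f:\vec S_{\ge\vec r}\to\vec U$ is $f(\vec s)=\vec s\vee\vec s_0$, $f(\overleftarrow s)=(\vec s\vee\vec s_0)^*$ for all $\vec s\in\vec S_{\ge\vec r}\setminus\{\overleftarrow r\}$ with $\vec s\ge\vec r$. $\vec s_0$ is linked to $\vec r$ if $\vec s_0\ge\vec r$ and $\vec s\vee\vec s_0\in\vec S_k$ for all $\vec s\in\vec S_k$ with $\vec s\ge\vec r$, $\vec s\ne\overleftarrow r$; it is $\mathcal F$-linked to $\vec r$ if moreover $f(\sigma)\in\mathcal F$ for every star $\sigma\in\mathcal F$ with $\sigma\subseteq\vec S_{\ge\vec r}\setminus\{\overleftarrow r\}$ having an element $\ge\vec r$. *)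

From mathcomp Require Import all_boot.
Set Implicit Arguments. Unset Strict Implicit. Unset Printing Implicit Defensive.

Section Seps.
Variable V : finType.

Definition osep := ({set V} * {set V})%type.

Definition is_sep (e : rel V) (s : osep) : bool :=
  (s.1 :|: s.2 == setT) &&
  [forall x in s.1 :\: s.2, forall y in s.2 :\: s.1, ~~ e x y].

Definition sep_le (s t : osep) : bool := (s.1 \subset t.1) && (t.2 \subset s.2).
Definition sep_lt (s t : osep) : bool := (s != t) && sep_le s t.
Definition sep_inv (s : osep) : osep := (s.2, s.1).
Definition sep_join (s t : osep) : osep := (s.1 :|: t.1, s.2 :&: t.2).
Definition sep_meet (s t : osep) : osep := (s.1 :&: t.1, s.2 :|: t.2).

Definition inSk (e : rel V) (k : nat) (s : osep) : bool :=
  is_sep e s && (#|s.1 :&: s.2| < k).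

Definition degenerate (s : osep) : bool := s == sep_inv s.

Definition trivial_sep (e : rel V) (k : nat) (r : osep) : bool :=
  [exists s, inSk e k s && sep_lt r s && sep_lt r (sep_inv s)].

Definition is_star (sigma : {set osep}) : bool :=
  (sigma != set0) &&
  [forall r in sigma, forall s in sigma, (r != s) ==> sep_le r (sep_inv s)].

Definition Fk (e : rel V) (k : nat) (sigma : {set osep}) : bool :=
  [&& sigma \subset [set s | inSk e k s], is_star sigma &
      #|\bigcap_(s in sigma) s.2| < k].

Definition forces (F : pred {set osep}) (r : osep) : bool :=
  F [set sep_inv r] || degenerate r.

Definition S_ge (e : rel V) (k : nat) (r : osep) : {set osep} :=
  [set s | inSk e k s && (sep_le r s || sep_le r (sep_inv s))].

Definition shift (r s0 s : osep) : osep :=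
  if sep_le r s then sep_join s s0 else sep_inv (sep_join (sep_inv s) s0).

Definition linked (e : rel V) (k : nat) (s0 r : osep) : Prop :=
  sep_le r s0 /\
  forall s, inSk e k s -> sep_le r s -> s != sep_inv r -> inSk e k (sep_join s s0).

Definition F_linked (e : rel V) (k : nat) (F : pred {set osep}) (s0 r : osep) : Prop :=
  linked e k s0 r /\
  forall sigma : {set osep}, F sigma -> is_star sigma ->
    sigma \subset S_ge e k r :\ sep_inv r ->
    (exists2 s, s \in sigma & sep_le r s) ->
    F [set shift r s0 s | s in sigma].

End Seps.

From mathcomp Require Import all_boot.
Set Implicit Arguments. Unset Strict Implicit. Unset Printing Implicit Defensive.

(* Since r is not forced, |A_r| >= k and hence r is not <= r*; so a star
   sigma in F_k inside S_{>=r} has exactly one element s >= r, and the shift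
   of sigma is again a star of separations in S_k. For its B-sides, let T be
   the intersection of the B-sides of the elements of sigma other than s.
   Then (T, B_s) enlarges the A-side of s, so it is a separation; its
   separator is the intersection of all B-sides of sigma, so it lies in S_k,
   and it is >= r. Linkedness puts (T, B_s) v s0 in S_k, and its separator
   contains the intersection of the B-sides of the shifted star. *)

Section OrientedSeparations.
Variable V : finType.
Implicit Types (r s t x y : osep V) (sigma : {set osep V}).

Lemma sep_invK : involutive (@sep_inv V).
Proof. by case. Qed.

Lemma sep_le_refl s : sep_le s s.
Proof. by rewrite /sep_le !subxx. Qed.

Lemma sep_le_trans r s t : sep_le r s -> sep_le s t -> sep_le r t.
Proof.
case/andP=> r1s1 s2r2 /andP[s1t1 t2s2].
by rewrite /sep_le (subset_trans r1s1 s1t1) (subset_trans t2s2 s2r2).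
Qed.

Lemma sep_le_inv s t : sep_le s t -> sep_le (sep_inv t) (sep_inv s).
Proof. by rewrite /sep_le /= andbC. Qed.

Lemma is_star_set1 s : is_star [set s].
Proof.
rewrite /is_star -card_gt0 cards1 /=; apply/forall_inP => x; rewrite inE => /eqP ->.
by apply/forall_inP => y; rewrite inE => /eqP ->; rewrite eqxx.
Qed.

Lemma star_le_inv sigma x y :
  is_star sigma -> x \in sigma -> y \in sigma -> x != y -> sep_le x (sep_inv y).
Proof.
case/andP=> _ /forall_inP/(_ x) star xs ys xy.
by move/forall_inP/(_ y ys)/implyP: (star xs); apply.
Qed.

Lemma star_ge_uniq sigma r s x :
  is_star sigma -> ~~ sep_le r (sep_inv r) -> s \in sigma -> x \in sigma ->
  sep_le r s -> sep_le r x -> x = s.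
Proof.
move=> star nrr ss xs rs rx; apply/eqP; apply: contraNT nrr => xs_neq.
exact: sep_le_trans rx (sep_le_trans (star_le_inv star xs ss xs_neq) (sep_le_inv rs)).
Qed.

Definition corner sigma s : osep V := (\bigcap_(t in sigma | t != s) t.2, s.2).

Lemma star_le_corner sigma s :
  is_star sigma -> s \in sigma -> sep_le s (corner sigma s).
Proof.
move=> star ss; rewrite /sep_le subxx andbT.
apply/bigcapsP => t /andP[ts ts_neq].
by rewrite eq_sym in ts_neq; case/andP: (star_le_inv star ss ts ts_neq).
Qed.

Section Shift.
Variables r s0 : osep V.

Lemma shift_le_inv x y :
  sep_le x (sep_inv y) -> ~~ (sep_le r x && sep_le r y) ->
  sep_le (shift r s0 x) (sep_inv (shift r s0 y)).
Proof.
rewrite {1}/sep_le /shift => /andP[xy yx].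
case: (sep_le r x); case: (sep_le r y) => //= _; rewrite /sep_le /=.
- by rewrite setSU // setSI.
- by rewrite setSI // setSU.
- by rewrite !(subset_trans (subsetIl _ _)) // (subset_trans _ (subsetUl _ _)).
Qed.

Lemma is_star_shift sigma :
  is_star sigma -> {in sigma &, forall x y, sep_le r x -> sep_le r y -> x = y} ->
  is_star (shift r s0 @: sigma).
Proof.
move=> star ge_uniq; rewrite /is_star imset_eq0 (andP star).1 /=.
apply/forall_inP => _ /imsetP[x xs ->]; apply/forall_inP => _ /imsetP[y ys ->].
apply/implyP => neq; have xy : x != y by apply: contraNneq neq => ->.
apply: shift_le_inv (star_le_inv star xs ys xy) _.
by apply: contra xy => /andP[rx ry]; rewrite (ge_uniq _ _ xs ys rx ry).
Qed.

Lemma bigcap_shift_sub sigma s :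
  s \in sigma -> sep_le r s -> {in sigma, forall t, sep_le r t -> t = s} ->
  \bigcap_(x in shift r s0 @: sigma) x.2 \subset
    (sep_join (corner sigma s) s0).1 :&: (sep_join (corner sigma s) s0).2.
Proof.
move=> ss rs ge_uniq; apply/subsetP => v /bigcapP v_in.
have := v_in _ (imset_f _ ss); rewrite /shift rs /= => vs.
rewrite /= inE vs andbT inE.
apply/orP; have [vs0 | vs0] := boolP (v \in s0.1); [by right | left].
apply/bigcapP => t /andP[ts ts_neq].
have rt : sep_le r t = false by apply: contraNF ts_neq => /(ge_uniq _ ts) ->.
by move: (v_in _ (imset_f _ ts)); rewrite /shift rt /= inE (negbTE vs0) orbF.
Qed.

End Shift.

Section Graph.
Variables (e : rel V) (k : nat).

Lemma is_sepP s :
  reflect (s.1 :|: s.2 = setT /\ forall u v, e u v -> (u \in s.2) || (v \in s.1))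
          (is_sep e s).
Proof.
apply: (iffP andP) => [[/eqP cov /forall_inP noedge] | [cov noedge]].
  split=> // u v euv; apply: contraTT euv; rewrite negb_or => /andP[uB vA].
  have uA : u \in s.1 by move: (in_setT u); rewrite -cov inE (negbTE uB) orbF.
  have vB : v \in s.2 by move: (in_setT v); rewrite -cov inE (negbTE vA).
  by apply: (forall_inP (noedge u _)); rewrite inE ?uA ?uB ?vA ?vB.
split; first exact/eqP.
apply/forall_inP => u; rewrite inE => /andP[uB _].
apply/forall_inP => v; rewrite inE => /andP[vA _].
by apply: contraNN uB => /noedge; rewrite (negbTE vA) orbF.
Qed.

Lemma is_sep_widenl s (A : {set V}) : s.1 \subset A -> is_sep e s -> is_sep e (A, s.2).
Proof.
move=> sA /is_sepP[cov noedge]; apply/is_sepP; split=> /=.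
  by apply/eqP; rewrite eqEsubset subsetT -cov setSU.
by move=> u v /noedge /orP[-> // | /(subsetP sA) ->]; rewrite orbT.
Qed.

Lemma corner_inSk sigma s : Fk e k sigma -> s \in sigma -> inSk e k (corner sigma s).
Proof.
case/and3P=> /subsetP sigmaS star small ss.
have /andP[sep _] : inSk e k s by have := sigmaS s ss; rewrite inE.
rewrite /inSk is_sep_widenl //; last by case/andP: (star_le_corner star ss).
by rewrite setIC -(bigD1 s ss).
Qed.

Hypothesis e_sym : symmetric e.

Lemma is_sep_inv s : is_sep e s -> is_sep e (sep_inv s).
Proof.
move=> /is_sepP[cov noedge]; apply/is_sepP; split; first by rewrite setUC.
by move=> u v; rewrite e_sym => /noedge; rewrite orbC.
Qed.

Lemma inSk_inv s : inSk e k s -> inSk e k (sep_inv s).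
Proof. by case/andP=> /is_sep_inv sep small; rewrite /inSk sep setIC. Qed.

Lemma unforced_not_le_inv r :
  inSk e k r -> ~~ forces (Fk e k) r -> ~~ sep_le r (sep_inv r).
Proof.
move=> rS; apply: contra => /andP[r1r2 _]; apply/orP; left.
have r1_small : #|r.1| < k by case/andP: rS => _; rewrite (setIidPl r1r2).
rewrite /Fk big_set1 r1_small is_star_set1 andbT.
by rewrite sub1set inE inSk_inv.
Qed.

Lemma shift_inSk r s0 x :
  linked e k s0 r -> x \in S_ge e k r :\ sep_inv r -> inSk e k (shift r s0 x).
Proof.
case=> _ lnk; rewrite !inE => /andP[x_neq /andP[xS rx_or]].
rewrite /shift; case: ifP => rx; first exact: lnk.
apply/inSk_inv/lnk; first exact: inSk_inv.
  by rewrite rx in rx_or.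
by apply: contraFneq rx => /(can_inj sep_invK) <-; apply: sep_le_refl.
Qed.

End Graph.
End OrientedSeparations.

Theorem lemma5p6 (V : finType) (e : rel V) (k : nat)
  (e_sym : symmetric e) (e_irr : irreflexive e)
  (V_ne : 0 < #|V|) (k_pos : 0 < k)
  (r s0 : osep V) :
  inSk e k s0 -> inSk e k r -> sep_le r s0 ->
  ~~ forces (Fk e k) r ->
  linked e k s0 r ->
  F_linked e k (Fk e k) s0 r.
Proof.
move=> _ rS _ unforced lnk.
have nrr := unforced_not_le_inv e_sym rS unforced.
split=> // sigma Fsigma star sub [s ss rs].
have ge_uniq : {in sigma, forall t, sep_le r t -> t = s}.
  by move=> t ts rt; apply: star_ge_uniq star nrr ss ts rs rt.
have r_le_corner := sep_le_trans rs (star_le_corner star ss).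
have corner_neq : corner sigma s != sep_inv r by apply: contraNneq nrr => <-.
have /andP[_ join_small] := lnk.2 _ (corner_inSk Fsigma ss) r_le_corner corner_neq.
apply/and3P; split.
- apply/subsetP => _ /imsetP[x xs ->]; rewrite inE.
  exact/(shift_inSk e_sym lnk)/(subsetP sub).
- apply: (is_star_shift s0 star) => x y xs ys rx ry.
  by rewrite (ge_uniq x xs rx) (ge_uniq y ys ry).
- exact: leq_ltn_trans (subset_leq_card (bigcap_shift_sub s0 ss rs ge_uniq)) join_small.
Qed.
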